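(* For every pair of integers $r$ and $k$ with $r\ge 2$, $k$ positive, $r+k\equiv 1\pmod 2$ and $k\le r$, there exist infinitely many triples $(G,P,d)$ such that (1) $G$ is a graph with $\chi(G)\le r$, (2) $P\subset V(G)$ and $|\mathcal{D}_G(P,2)|=3(r+k-1)$, (3) $d\colon P\to[r+k]$ is a precoloring of $P$ in $G$, and (4) $d$ cannot be extended to a $\frac{3r+k+1}{2}$-coloring of $G$.
   Context: For a graph $G$, $P\subset V(G)$ and a positive integer $k$, $\mathcal{D}_G(P,k)=\{\{x,y\}\subset P: x\ne y,\ d_G(x,y)\le k\}$, where $d_G$ is the distance in $G$. $[m]=\{1,\dots,m\}$. A precoloring of $P$ in $G$ is a proper coloring of $G[P]$; an $m$-coloring of $G$ is a proper coloring using at most $m$ colors; $d$ is extended by a coloring $f$ of $G$ if $f(v)=d(v)$ for all $v\in P$. *)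

From mathcomp Require Import all_boot.
Set Implicit Arguments. Unset Strict Implicit. Unset Printing Implicit Defensive.

Definition simple_graph (T : finType) (e : rel T) : Prop :=
  symmetric e /\ irreflexive e.

(* ball e k x = { y : d_G(x,y) <= k }: vertices reachable from x by a walk of
   length at most k (computed by k rounds of neighbourhood expansion). *)
Definition ball (T : finType) (e : rel T) (k : nat) (x : T) : {set T} :=
  iter k (fun S : {set T} => S :|: [set y | [exists z in S, e z y]]) [set x].

Definition dist_le (T : finType) (e : rel T) (k : nat) (x y : T) : bool :=
  y \in ball e k x.

Definition DG (T : finType) (e : rel T) (P : {set T}) (k : nat) : {set {set T}} :=
  [set s : {set T} | (s \subset P) && (#|s| == 2) &&
     [exists x, exists y, (s == [set x; y]) && (x != y) &&
        dist_le e k x y]].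

Definition proper_coloring (T : finType) (e : rel T) (m : nat) (f : T -> 'I_m) : Prop :=
  forall x y, e x y -> f x != f y.

Definition chi_le (T : finType) (e : rel T) (r : nat) : Prop :=
  exists f : T -> 'I_r, proper_coloring e f.

Definition precoloring (T : finType) (e : rel T) (P : {set T}) (c : nat) (d : T -> 'I_c) : Prop :=
  forall x y, x \in P -> y \in P -> e x y -> d x != d y.

Definition extendable (T : finType) (e : rel T) (P : {set T}) (c : nat) (d : T -> 'I_c) (m : nat) : Prop :=
  exists f : T -> 'I_m, proper_coloring e f /\
    forall v, v \in P -> nat_of_ord (f v) = nat_of_ord (d v).

From HB Require Import structures.
From mathcomp Require Import all_boot zify.
Set Implicit Arguments. Unset Strict Implicit. Unset Printing Implicit Defensive.

(* Write r = a + 2 and r + k = b + 3 (so b is even).  The instance has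
   precoloured vertices p_0, p_1, p_2 and t_0, t_1, t_2 coloured 0, 1, 2 and
   q_l coloured l + 3 (l < b); a vertex z adjacent to every t_i; and a complete
   (a+1)-partite graph with parts Y_s = {y_(s,0), ..., y_(s,b)}, every y being
   adjacent to z and to every p_i, and y_(s,l+1) adjacent to q_l.  Within P only
   the pairs p_i p_j, t_i t_j and p_i q_l are at distance at most 2, which gives
   3 (b + 2) pairs, and colouring Y_s with s + 1, the t_i with 1 and everything
   else with 0 shows chi <= r.
   In an extension with m colours, z and all of Y receive colours >= 3, Y avoids
   the colour of z, and distinct parts use disjoint colour sets.  A part using a
   single colour c has c >= b + 3, for otherwise y_(s,c-2) sees q_(c-3).  Hence
   every part has |colours| + |colours >= b + 3| >= 2, so that
   2 (a + 1) <= (m - 4) + (m - b - 3), which fails for m = (3r + k + 1) / 2.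
   Isolated padding vertices make the instances arbitrarily large. *)

Section Pullback.
Variables (T T' : finType) (e : rel T) (f : T' -> T) (g : T -> T').
Hypotheses (fK : cancel f g) (gK : cancel g f).

Definition pullback : rel T' := [rel x y | e (f x) (f y)].

Lemma ball_pullback k x : ball pullback k x = f @^-1: ball e k (f x).
Proof.
elim: k => [|k IHk]; first by apply/setP=> y; rewrite !inE (can_eq fK).
rewrite /ball !iterS -!/(ball _ k _) IHk; apply/setP=> y; rewrite !inE.
congr (_ || _); apply/existsP/existsP=> -[z].
  by rewrite inE => ?; exists (f z).
by rewrite -{1 2}[z]gK => ?; exists (g z); rewrite inE.
Qed.

Lemma dist_le_pullback k x y : dist_le pullback k x y = dist_le e k (f x) (f y).
Proof. by rewrite /dist_le ball_pullback inE. Qed.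

Lemma DG_pullback (P : {set T}) k :
  DG pullback (f @^-1: P) k = [set g @: s | s : {set T} in DG e P k].
Proof.
have fI : injective f := can_inj fK; have gI : injective g := can_inj gK.
have imK (s : {set T'}) : g @: (f @: s) = s.
  by rewrite -imset_comp (eq_imset (g:=id)) ?imset_id // => x /=; rewrite fK.
apply/setP=> s; rewrite -[in RHS](imK s) (mem_imset _ _ (imset_inj gI)) !inE.
rewrite sub_imset_pre (card_imset _ fI); congr (_ && _).
apply/existsP/existsP=> [[x /existsP[y /andP[/andP[/eqP-> xy] dxy]]]|
                        [x /existsP[y /andP[/andP[/eqP s_xy xy] dxy]]]].
  exists (f x); apply/existsP; exists (f y).
  by rewrite imsetU1 imset_set1 eqxx (inj_eq fI) xy -dist_le_pullback.
exists (g x); apply/existsP; exists (g y).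
rewrite -(imK s) s_xy imsetU1 imset_set1 eqxx (inj_eq gI) xy.
by rewrite dist_le_pullback !gK.
Qed.

Lemma card_DG_pullback (P : {set T}) k : #|DG pullback (f @^-1: P) k| = #|DG e P k|.
Proof. by rewrite DG_pullback card_imset //; apply/imset_inj/(can_inj gK). Qed.

End Pullback.

Lemma simple_graph_pullback (T T' : finType) (e : rel T) (f : T' -> T) :
  simple_graph e -> simple_graph (pullback e f).
Proof. by case=> e_sym e_irr; split=> [x y | x] /=; [apply: e_sym | apply: e_irr]. Qed.

Lemma chi_le_pullback (T T' : finType) (e : rel T) (f : T' -> T) r :
  chi_le e r -> chi_le (pullback e f) r.
Proof. by case=> c c_ok; exists (c \o f) => x y /c_ok. Qed.

Lemma precoloring_pullback (T T' : finType) (e : rel T) (f : T' -> T) (P : {set T})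
    c (d : T -> 'I_c) :
  precoloring e P d -> precoloring (pullback e f) (f @^-1: P) (d \o f).
Proof. by move=> d_ok x y; rewrite !inE; apply: d_ok. Qed.

Lemma extendable_pullback (T T' : finType) (e : rel T) (f : T' -> T) (g : T -> T')
    (gK : cancel g f) (P : {set T}) c (d : T -> 'I_c) m :
  extendable (pullback e f) (f @^-1: P) (d \o f) m -> extendable e P d m.
Proof.
case=> h [h_ok h_ext]; exists (h \o g); split=> [x y exy | v Pv].
  by apply: h_ok; rewrite /pullback /= !gK.
by rewrite /= h_ext ?inE /= gK.
Qed.

Lemma relabel_ord (T : finType) (e : rel T) (P : {set T}) c (d : T -> 'I_c) r D m N :
  N <= #|T| -> simple_graph e -> chi_le e r -> #|DG e P 2| = D ->
  precoloring e P d -> ~ extendable e P d m ->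
  exists n (e' : rel 'I_n) (P' : {set 'I_n}) (d' : 'I_n -> 'I_c),
    N <= n /\ simple_graph e' /\ chi_le e' r /\ #|DG e' P' 2| = D /\
    precoloring e' P' d' /\ ~ extendable e' P' d' m.
Proof.
have fK := @enum_valK T; have gK := @enum_rankK T.
move=> N_le e_simple e_chi <- d_ok not_ext.
exists #|T|, (pullback e enum_val), (enum_val @^-1: P), (d \o enum_val).
rewrite (card_DG_pullback _ fK gK).
split=> //; split; first exact: simple_graph_pullback.
split; first exact: chi_le_pullback.
split=> //; split; first exact: precoloring_pullback.
by move/(extendable_pullback gK).
Qed.

Lemma dist_le2 (T : finType) (e : rel T) x y :
  dist_le e 2 x y = [|| y == x, e x y | [exists z, e x z && e z y]].
Proof.
rewrite /dist_le /ball /= !inE; apply/idP/idP.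
- case/orP=> [/orP[->//|]|].
    by case/existsP=> z; rewrite !inE => /andP[/eqP-> ->]; rewrite orbT.
  case/existsP=> z /andP[]; rewrite !inE => /orP[/eqP->|]; first by move=> ->; rewrite orbT.
  case/existsP=> w; rewrite !inE => /andP[/eqP-> exz ezy].
  by apply/or3P; apply: Or33; apply/existsP; exists z; rewrite exz ezy.
- case/or3P=> [->//|exy|/existsP[z /andP[exz ezy]]].
    apply/orP; left; apply/orP; right; apply/existsP; exists x; by rewrite !inE eqxx exy.
  apply/orP; right; apply/existsP; exists z; rewrite !inE ezy andbT.
  by apply/orP; right; apply/existsP; exists x; rewrite !inE eqxx exz.
Qed.

Lemma leq_sum_card_disjoint (I T : finType) (S : I -> {set T}) (A : {set T}) :
  (forall i j x, x \in S i -> x \in S j -> i = j) -> (forall i, S i \subset A) ->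
  \sum_i #|S i| <= #|A|.
Proof.
move=> S_disj S_sub.
have cardS i : #|S i| = \sum_(x in A) (x \in S i).
  rewrite -big_mkcondr -sum1_card; apply: eq_bigl => x /=.
  by case: (boolP (x \in S i)) => [/(subsetP (S_sub i))->|]; rewrite ?andbF.
rewrite (eq_bigr _ (fun i _ => cardS i)) exchange_big /= -sum1_card.
apply: leq_sum => x _.
case: (pickP (fun i => x \in S i)) => [i xSi|xS0]; last by rewrite big1 // => i _; rewrite xS0.
rewrite (bigD1 i) //= xSi big1 // => j.
by case: (boolP (x \in S j)) => // xSj; rewrite (S_disj _ _ _ xSj xSi) eqxx.
Qed.

Lemma leq_card_ord_ge m k : k <= m -> #|[set c : 'I_m | k <= c]| <= m - k.
Proof.
move=> le_km.
have card_lt : k <= #|[set c : 'I_m | c < k]|.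
  have widen_inj : injective (widen_ord le_km) by move=> i j /(congr1 val) /= /val_inj.
  rewrite -[k in k <= _]card_ord -(card_imset _ widen_inj).
  by apply/subset_leq_card/subsetP=> _ /imsetP[i _ ->]; rewrite inE /=.
suff card_split : #|[set c : 'I_m | k <= c]| + #|[set c : 'I_m | c < k]| = m by lia.
rewrite -[m in RHS]card_ord -(cardsC [set c : 'I_m | k <= c]); congr (_ + _).
by apply: eq_card => c; rewrite !inE -ltnNge.
Qed.

Inductive vertex (a b N : nat) : Type :=
| Vp of 'I_3 | Vz | Vt of 'I_3 | Vy of 'I_a.+1 & 'I_b.+1 | Vq of 'I_b | Vpad of 'I_N.

Section VertexFinType.
Variables a b N : nat.

Definition vertex_code (v : vertex a b N) :
    'I_3 + (unit + ('I_3 + (('I_a.+1 * 'I_b.+1) + ('I_b + 'I_N)))) :=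
  match v with
  | Vp i => inl i | Vz => inr (inl tt) | Vt i => inr (inr (inl i))
  | Vy s j => inr (inr (inr (inl (s, j)))) | Vq l => inr (inr (inr (inr (inl l))))
  | Vpad i => inr (inr (inr (inr (inr i)))) end.

Definition vertex_decode (x : 'I_3 + (unit + ('I_3 + (('I_a.+1 * 'I_b.+1) + ('I_b + 'I_N))))) :
    vertex a b N :=
  match x with
  | inl i => Vp _ _ _ i | inr (inl _) => Vz _ _ _ | inr (inr (inl i)) => Vt _ _ _ i
  | inr (inr (inr (inl (s, j)))) => Vy _ s j | inr (inr (inr (inr (inl l)))) => Vq _ _ l
  | inr (inr (inr (inr (inr i)))) => Vpad _ _ i end.

Lemma vertex_codeK : cancel vertex_code vertex_decode. Proof. by case. Qed.

End VertexFinType.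

HB.instance Definition _ a b N := Finite.copy (vertex a b N) (can_type (@vertex_codeK a b N)).

Section Gadget.
Variables a b N : nat.
Local Notation vertex := (vertex a b N).
Local Notation vp := (@Vp a b N).
Local Notation vz := (@Vz a b N).
Local Notation vt := (@Vt a b N).
Local Notation vy := (@Vy a b N).
Local Notation vq := (@Vq a b N).

Definition adj (u v : vertex) : bool :=
  match u, v with
  | Vp _, Vy _ _ | Vy _ _, Vp _ => true
  | Vz, Vy _ _ | Vy _ _, Vz => true
  | Vz, Vt _ | Vt _, Vz => true
  | Vy s _, Vy s' _ => s != s'
  | Vy _ j, Vq l | Vq l, Vy _ j => (j : nat) == l.+1
  | _, _ => false end.

Lemma simple_graph_adj : simple_graph adj.
Proof.
split; last by case=> * //=; rewrite eqxx.
by case=> [?||?|? ?|?|?] [?||?|? ?|?|?] //=; rewrite eq_sym.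
Qed.

Lemma card_vertex_ge : N <= #|{: vertex}|.
Proof.
have pad_inj : injective (@Vpad a b N) by move=> i j [].
rewrite -[N in N <= _]card_ord -(card_imset _ pad_inj).
by rewrite -cardsT; apply/subset_leq_card/subsetT.
Qed.

Definition base_colour (v : vertex) : nat :=
  match v with Vt _ => 1 | Vy s _ => s.+1 | _ => 0 end.

Lemma base_colour_lt v : base_colour v < a.+2.
Proof. by case: v => //= s _; rewrite ltnS. Qed.

Lemma chi_le_adj : chi_le adj a.+2.
Proof.
exists (fun v => Ordinal (base_colour_lt v)) => u v; rewrite -val_eqE /=.
by case: u => [?||?|s ?|?|?]; case: v => [?||?|s' ?|?|?] //=; rewrite eqSS.
Qed.

Definition precoloured (v : vertex) : bool :=
  match v with Vp _ | Vt _ | Vq _ => true | _ => false end.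

Definition Pgad : {set vertex} := [set v | precoloured v].

Definition pre_colour (v : vertex) : nat :=
  match v with Vp i => i | Vt i => i | Vq l => l + 3 | _ => 0 end.

Lemma pre_colour_lt v : pre_colour v < b.+3.
Proof.
by case: v => //= [i|i|l]; [have := ltn_ord i | have := ltn_ord i | have := ltn_ord l]; lia.
Qed.

Definition dgad (v : vertex) : 'I_b.+3 := Ordinal (pre_colour_lt v).

Lemma precoloring_dgad : precoloring adj Pgad dgad.
Proof. by move=> x y; rewrite !inE; case: x => [?||?|? ?|?|?]; case: y. Qed.

Definition close_pair (u v : vertex) : bool :=
  match u, v with
  | Vp _, Vp _ | Vt _, Vt _ | Vp _, Vq _ | Vq _, Vp _ => true
  | _, _ => false end.

Lemma dist_le2_precoloured u v : precoloured u -> precoloured v -> u != v ->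
  dist_le adj 2 u v = close_pair u v.
Proof.
move=> Pu Pv uv; rewrite dist_le2 eq_sym (negbTE uv) /=.
have -> : adj u v = false by case: u Pu uv => [?||?|? ?|?|?]; case: v Pv => [?||?|? ?|?|?].
(* Common neighbours: a y for two p's, z for two t's, y_(0,l+1) for p_i and q_l;
   two distinct q's have none. *)
case: u Pu uv => [i||i|? ?|l|?] //; case: v Pv => [i'||i'|? ?|l'|?] //= _ _ uv;
  try (by apply/existsP; exists (vy ord0 ord0));
  try (by apply/existsP; exists vz);
  try (by apply/existsP; exists (vy ord0 (Ordinal (ltn_ord l : l.+1 < b.+1))); rewrite /= eqxx);
  try (by apply/existsP; exists (vy ord0 (Ordinal (ltn_ord l' : l'.+1 < b.+1))); rewrite /= eqxx);
  apply/negbTE/existsPn => -[?||?|? ?|?|?] //=; rewrite ?andbF //.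
apply: contra uv => /andP[/eqP ll1 /eqP ll2].
by apply/eqP; congr Vq; apply/val_inj/succn_inj; rewrite -ll1 -ll2.
Qed.

Lemma close_pair_DG x y : precoloured x -> precoloured y -> x != y -> close_pair x y ->
  [set x; y] \in DG adj Pgad 2.
Proof.
move=> Px Py xy cxy; rewrite inE cards2 xy eqxx andbT; apply/andP; split.
  by apply/subsetP=> z; rewrite !inE => /orP[] /eqP ->.
by apply/existsP; exists x; apply/existsP; exists y; rewrite eqxx xy dist_le2_precoloured.
Qed.

Lemma DG_close_pair s : s \in DG adj Pgad 2 ->
  exists x y, [/\ s = [set x; y], x != y, precoloured x, precoloured y & close_pair x y].
Proof.
rewrite !inE => /andP[/andP[sP _] /existsP[x /existsP[y /andP[/andP[/eqP s_xy xy] dxy]]]].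
have Px : precoloured x by move/subsetP: sP => /(_ x); rewrite s_xy !inE eqxx => /(_ isT).
have Py : precoloured y by move/subsetP: sP => /(_ y); rewrite s_xy !inE eqxx orbT => /(_ isT).
by exists x, y; split => //; rewrite -dist_le2_precoloured.
Qed.

Definition pairs_of (f : 'I_3 -> vertex) : {set {set vertex}} :=
  [set f @: s | s : {set 'I_3} in [set s : {set 'I_3} | #|s| == 2]].

Definition pq_pairs : {set {set vertex}} := [set [set vp x.1; vq x.2] | x : 'I_3 * 'I_b].

Lemma mem_pairs_of (f : 'I_3 -> vertex) i j : i != j -> [set f i; f j] \in pairs_of f.
Proof.
by move=> ij; apply/imsetP; exists [set i; j]; rewrite ?inE ?cards2 ?ij // imsetU1 imset_set1.
Qed.

Lemma DG_gadget : DG adj Pgad 2 = pairs_of vp :|: pairs_of vt :|: pq_pairs.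
Proof.
apply/setP=> s; apply/idP/idP.
  case/DG_close_pair=> x [y [-> xy Px Py]].
  case: x Px xy => [i||i|? ?|l|?] //; case: y Py => [i'||i'|? ?|l'|?] // _ _ xy _; rewrite !inE.
  - by rewrite mem_pairs_of //; apply: contraNneq xy => ->.
  - by apply/orP; right; apply/imsetP; exists (i, l').
  - by rewrite mem_pairs_of ?orbT //; apply: contraNneq xy => ->.
  - by apply/orP; right; apply/imsetP; exists (i', l); rewrite //= setUC.
rewrite !in_setU => /orP[/orP[]|].
- case/imsetP=> s2; rewrite inE => /cards2P[i [j [ij ->]]] ->; rewrite imsetU1 imset_set1.
  by apply: close_pair_DG => //; apply: contra ij => /eqP[->].
- case/imsetP=> s2; rewrite inE => /cards2P[i [j [ij ->]]] ->; rewrite imsetU1 imset_set1.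
  by apply: close_pair_DG => //; apply: contra ij => /eqP[->].
- by case/imsetP=> [[i l]] _ ->; apply: close_pair_DG.
Qed.

Lemma card_pairs_of (f : 'I_3 -> vertex) : injective f -> #|pairs_of f| = 3.
Proof. by move=> f_inj; rewrite card_imset ?card_draws ?card_ord //; apply: imset_inj. Qed.

Lemma card_pq_pairs : #|pq_pairs| = 3 * b.
Proof.
rewrite card_imset ?card_prod ?card_ord // => -[i l] [i' l'] /= eq_pq.
have : vp i \in [set vp i'; vq l'] by rewrite -eq_pq !inE eqxx.
rewrite !inE => /orP[/eqP[->]|//].
have : vq l \in [set vp i'; vq l'] by rewrite -eq_pq !inE eqxx orbT.
by rewrite !inE => /orP[//|/eqP[->]].
Qed.

Lemma card_DG_gadget : #|DG adj Pgad 2| = 3 * b.+2.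
Proof.
have vp_inj : injective vp by move=> ? ? [].
have vt_inj : injective vt by move=> ? ? [].
have disj_pt : pairs_of vp :&: pairs_of vt = set0.
  apply/setP=> s; rewrite !inE; apply/negbTE/negP => /andP[].
  case/imsetP=> s0; rewrite inE => /cards2P[i [j [_ ->]]] ->.
  case/imsetP=> s1 _ /setP /(_ (vp i)).
  by rewrite (mem_imset _ _ vp_inj) !inE eqxx /= => /esym/imsetP[? _ []].
have disj_q : (pairs_of vp :|: pairs_of vt) :&: pq_pairs = set0.
  apply/setP=> s; rewrite !inE; apply/negbTE/negP => /andP[s_pt].
  case/imsetP=> [[i l]] _ s_pq; move: s_pt; rewrite s_pq => /orP[]; case/imsetP=> s0 _
    /setP /(_ (vq l)); rewrite !inE eqxx orbT => /esym/imsetP[? _ //].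
rewrite DG_gadget cardsU disj_q cards0 subn0 cardsU disj_pt cards0 subn0.
by rewrite !card_pairs_of // card_pq_pairs; lia.
Qed.

Section NoExtension.
Variables (m : nat) (g : vertex -> 'I_m).
Hypotheses (g_proper : proper_coloring adj g)
           (g_ext : forall v, v \in Pgad -> nat_of_ord (g v) = dgad v).

Lemma adj_colour_neq u v : adj u v -> (g u : nat) != g v.
Proof. by move/g_proper; apply: contra => /eqP/val_inj->. Qed.

Lemma colour_vp i : nat_of_ord (g (vp i)) = i. Proof. by rewrite g_ext ?inE. Qed.
Lemma colour_vt i : nat_of_ord (g (vt i)) = i. Proof. by rewrite g_ext ?inE. Qed.
Lemma colour_vq l : nat_of_ord (g (vq l)) = l + 3. Proof. by rewrite g_ext ?inE. Qed.

Lemma colour_vz_ge3 : 3 <= g vz.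
Proof.
rewrite leqNgt; apply/negP => lt_z3.
by have := adj_colour_neq (u := vz) (v := vt (Ordinal lt_z3)) isT; rewrite colour_vt eqxx.
Qed.

Lemma colour_vy_ge3 s j : 3 <= g (vy s j).
Proof.
rewrite leqNgt; apply/negP => lt_y3.
by have := adj_colour_neq (u := vp (Ordinal lt_y3)) (v := vy s j) isT; rewrite colour_vp eqxx.
Qed.

Definition part_colours s : {set 'I_m} := [set g (vy s j) | j in 'I_b.+1].

Lemma part_colours_disjoint s s' c :
  c \in part_colours s -> c \in part_colours s' -> s = s'.
Proof.
case/imsetP=> j _ ->; case/imsetP=> j' _ eq_c; apply/eqP; apply: contraT => ss'.
by have := adj_colour_neq (u := vy s j) (v := vy s' j') ss'; rewrite eq_c eqxx.
Qed.

Lemma part_colours_sub s : part_colours s \subset [set c : 'I_m | 3 <= c] :\ g vz.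
Proof.
apply/subsetP=> _ /imsetP[j _ ->]; rewrite !inE colour_vy_ge3 andbT.
by apply: contra (adj_colour_neq (u := vz) (v := vy s j) isT) => /eqP->.
Qed.

Lemma monochromatic_part_colour s : #|part_colours s| <= 1 -> b.+3 <= g (vy s ord0).
Proof.
move/card_le1_eqP => mono.
have colour_part j : g (vy s j) = g (vy s ord0) by apply: mono; apply: imset_f.
rewrite leqNgt; apply/negP => small.
have lt_lb : g (vy s ord0) - 3 < b by move: (colour_vy_ge3 s ord0) small; lia.
have lt_jb : (g (vy s ord0) - 3).+1 < b.+1 by rewrite ltnS.
have := adj_colour_neq (u := vy s (Ordinal lt_jb)) (v := vq (Ordinal lt_lb)) (eqxx _).
by rewrite colour_vq colour_part /=; move: (colour_vy_ge3 s ord0); lia.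
Qed.

Lemma part_weight s :
  2 <= #|part_colours s| + #|part_colours s :&: [set c : 'I_m | b.+3 <= c]|.
Proof.
case: (leqP 2 #|part_colours s|) => [two|/monochromatic_part_colour big]; first lia.
have c0 : g (vy s ord0) \in part_colours s by apply: imset_f.
have : 0 < #|part_colours s| by apply/card_gt0P; exists (g (vy s ord0)).
have : 0 < #|part_colours s :&: [set c : 'I_m | b.+3 <= c]|.
  by apply/card_gt0P; exists (g (vy s ord0)); rewrite !inE c0 big.
lia.
Qed.

End NoExtension.

Lemma not_extendable_dgad m : b.+3 <= m -> 2 * m < 2 * a + b + 9 ->
  ~ extendable adj Pgad dgad m.
Proof.
move=> le_bm lt_m [g [g_proper g_ext]].
pose W := [set c : 'I_m | b.+3 <= c].
have sum_parts := leq_sum_card_disjoint (part_colours_disjoint g_proper)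
                                        (part_colours_sub g_proper g_ext).
have sum_parts_W : \sum_s #|part_colours g s :&: W| <= #|W|.
  apply: leq_sum_card_disjoint (fun s => subsetIr _ W) => s s' c /setIP[cs _] /setIP[cs' _].
  exact: part_colours_disjoint cs cs'.
have card_R : #|[set c : 'I_m | 3 <= c] :\ g vz| <= m - 4.
  have := leq_card_ord_ge (leq_trans (isT : 3 <= b.+3) le_bm).
  by rewrite (cardsD1 (g vz)) inE colour_vz_ge3 //; lia.
have card_W : #|W| <= m - b.+3 := leq_card_ord_ge le_bm.
have weights : \sum_(s < a.+1) 2 <= \sum_s (#|part_colours g s| + #|part_colours g s :&: W|).
  by apply: leq_sum => s _; apply: part_weight.
rewrite big_split sum_nat_const card_ord /= in weights.
have := leq_trans weights (leq_trans (leq_add sum_parts sum_parts_W) (leq_add card_R card_W)).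
lia.
Qed.

End Gadget.

Theorem theorem7 :
  forall r k : nat, 2 <= r -> 0 < k -> odd (r + k) -> k <= r ->
  forall N : nat, exists (n : nat) (e : rel 'I_n) (P : {set 'I_n}) (d : 'I_n -> 'I_(r + k)),
    N <= n /\
    simple_graph e /\
    chi_le e r /\
    #|DG e P 2| = 3 * (r + k - 1) /\
    precoloring e P d /\
    ~ extendable e P d ((3 * r + k + 1) %/ 2).
Proof.
(* The construction does not need 0 < k. *)
move=> [|[|a]] k // _ _ odd_rk le_kr N.
have [b rk_eq] : exists b, a.+2 + k = b.*2.+3.
  by exists (a + k)./2; move: (odd_double_half (a.+2 + k)); rewrite odd_rk; lia.
have -> : (3 * a.+2 + k + 1) %/ 2 = a + b + 4 by lia.
rewrite rk_eq subn1 /=.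
apply: (relabel_ord (e := @adj a b.*2 N) (P := Pgad a b.*2 N) (d := @dgad a b.*2 N)).
- exact: card_vertex_ge.
- exact: simple_graph_adj.
- exact: chi_le_adj.
- exact: card_DG_gadget.
- exact: precoloring_dgad.
- apply: not_extendable_dgad; lia.
Qed.
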